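(* Let $G$ be a finite group and let $\vec{\mathcal{C}}$ be a directed cycle of $\vec{\mathcal{P}}(G)$. Then $\vec{\mathcal{C}}$ is a maximal directed cycle if and only if its vertex set equals $[x]_{\diamond}$ for some $x\in G$ with $|[x]_{\diamond}|\geq3$.
   Context: The directed power graph $\vec{\mathcal{P}}(G)$ has vertex set $G$ and an arc $(x,y)$ iff $x\neq y$ and $y=x^m$ for some positive integer $m$. $x\diamond y$ iff $\langle x\rangle=\langle y\rangle$; $[x]_\diamond$ is the class of $x$. A directed cycle is a sequence $x_1,\dots,x_k,x_1$ of $k\ge3$ distinct vertices with arcs $(x_i,x_{i+1})$ for $i<k$ and $(x_k,x_1)$ (a subdigraph). A directed cycle is maximal if there is no directed cycle of the digraph whose vertex set properly contains its vertex set. *)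

From mathcomp Require Import all_boot all_fingroup.
Set Implicit Arguments. Unset Strict Implicit. Unset Printing Implicit Defensive.
Local Open Scope group_scope.

Definition dpg_arc (gT : finGroupType) (x y : gT) : Prop :=
  x <> y /\ exists m : nat, (0 < m)%N /\ y = x ^+ m.

(* A directed cycle x_1, ..., x_k, x_1 (k >= 3, distinct vertices),
   given as the sequence [:: x_1; ...; x_k]. *)
Definition is_dcycle (gT : finGroupType) (s : seq gT) : Prop :=
  [/\ (3 <= size s)%N, uniq s &
      forall i : nat, (i < size s)%N ->
        dpg_arc (nth 1 s i) (nth 1 s (i.+1 %% size s))].

Definition dcycle_vertices (gT : finGroupType) (s : seq gT) : {set gT} :=
  [set x in s].

Definition max_dcycle (gT : finGroupType) (s : seq gT) : Prop :=
  is_dcycle s /\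
  ~ (exists t : seq gT, is_dcycle t /\ dcycle_vertices s \proper dcycle_vertices t).

Definition diamond_class (gT : finGroupType) (x : gT) : {set gT} :=
  [set y | <[y]> == <[x]>].

From mathcomp Require Import all_boot all_fingroup.
Set Implicit Arguments. Unset Strict Implicit. Unset Printing Implicit Defensive.
Local Open Scope group_scope.

(* Arcs only shrink the generated cyclic subgroup, so around a directed cycle
   all vertices generate the same subgroup: the vertex set of a cycle lies in
   a single diamond class. Conversely, any two distinct elements of a class
   are joined by an arc, so any listing of a class of size at least 3 is a
   directed cycle. Hence a cycle is maximal iff it exhausts its class. *)

Lemma cycle_from_nth (T : Type) (e : rel T) (x0 : T) (s : seq T) :
  (forall i, (i < size s)%N -> e (nth x0 s i) (nth x0 s (i.+1 %% size s))) ->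
  path.cycle e s.
Proof.
case: s => //= x p e_s; apply/(pathP x0) => i; rewrite size_rcons => lt_i_p1.
rewrite -rcons_cons !nth_rcons /= lt_i_p1.
have := e_s i lt_i_p1; rewrite ltnS leq_eqVlt in lt_i_p1.
case/predU1P: lt_i_p1 => [-> | lt_ip]; first by rewrite modnn ltnn eqxx.
by rewrite modn_small ?lt_ip.
Qed.

Lemma uniq_nth_next_neq (T : eqType) (x0 : T) (s : seq T) i :
  uniq s -> (1 < size s)%N -> (i < size s)%N ->
  nth x0 s i != nth x0 s (i.+1 %% size s).
Proof.
move=> s_uniq s_gt1 lt_is; rewrite nth_uniq ?ltn_mod ?(ltnW s_gt1) //.
have := lt_is; rewrite leq_eqVlt => /predU1P [eq_i1s | lt_i1s].
  by rewrite -eq_i1s modnn; apply: contraTneq s_gt1 => i0; rewrite -eq_i1s i0.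
by rewrite modn_small // neq_ltn ltnSn.
Qed.

Lemma dpg_arc_subcycle (gT : finGroupType) (x y : gT) :
  dpg_arc x y -> <[y]> \subset <[x]>.
Proof. by case=> _ [m [_ ->]]; apply: cycleX. Qed.

Lemma dpg_arc_mem_cycle (gT : finGroupType) (x y : gT) :
  y \in <[x]> -> x != y -> dpg_arc x y.
Proof.
case/cycleP=> [[|m] ->] neq_xy; split; try exact/eqP.
  by exists #[x]; rewrite expg_order order_gt0.
by exists m.+1.
Qed.

Lemma dcycle_cycle_eq (gT : finGroupType) (s : seq gT) :
  is_dcycle s -> {in s &, forall x y, <[x]> = <[y]>}.
Proof.
case=> _ _ s_arcs.
have sub_trans : transitive (fun x y : gT => <[y]> \subset <[x]>).
  by move=> y x z sub_yx sub_zy; apply: subset_trans sub_yx.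
have /allrelP s_sub : all2rel (fun x y : gT => <[y]> \subset <[x]>) s.
  rewrite -cycle_all2rel //; apply: (@cycle_from_nth _ _ 1) => i lt_is.
  exact: dpg_arc_subcycle (s_arcs i lt_is).
by move=> x y x_s y_s; apply/eqP; rewrite eqEsubset !s_sub.
Qed.

Lemma dcycle_vertices_sub_diamond (gT : finGroupType) (s : seq gT) (x : gT) :
  is_dcycle s -> x \in s -> dcycle_vertices s \subset diamond_class x.
Proof.
move=> s_cyc x_s; apply/subsetP => y; rewrite !inE => y_s.
by rewrite (dcycle_cycle_eq s_cyc y_s x_s).
Qed.

Lemma diamond_class_eq (gT : finGroupType) (x y : gT) :
  y \in diamond_class x -> diamond_class y = diamond_class x.
Proof. by rewrite inE => /eqP cyc_yx; apply/setP => z; rewrite !inE cyc_yx. Qed.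

Lemma dcycle_vertices_enum (gT : finGroupType) (A : {set gT}) :
  dcycle_vertices (enum A) = A.
Proof. by apply/setP => z; rewrite inE mem_enum. Qed.

Lemma card_dcycle_vertices (gT : finGroupType) (s : seq gT) :
  is_dcycle s -> #|dcycle_vertices s| = size s.
Proof. by case=> _ s_uniq _; rewrite cardsE; apply/card_uniqP. Qed.

Lemma enum_diamond_dcycle (gT : finGroupType) (x : gT) :
  (3 <= #|diamond_class x|)%N -> is_dcycle (enum (diamond_class x)).
Proof.
rewrite cardE; set e := enum _ => size_ge3; split=> // [|i lt_i]; first exact: enum_uniq.
have cyc_nth j : (j < size e)%N -> <[nth 1 e j]> = <[x]>.
  by move/(mem_nth 1); rewrite mem_enum inE => /eqP.
apply: dpg_arc_mem_cycle; last first.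
  by rewrite uniq_nth_next_neq ?enum_uniq // (ltn_trans _ size_ge3).
have lt_i1 : (i.+1 %% size e < size e)%N by rewrite ltn_mod (leq_ltn_trans _ lt_i).
by rewrite (cyc_nth i lt_i) -(cyc_nth _ lt_i1) cycle_id.
Qed.

Theorem mainTheorem3 (gT : finGroupType) (s : seq gT) :
  is_dcycle s ->
  (max_dcycle s <->
   exists x : gT, dcycle_vertices s = diamond_class x /\ (3 <= #|diamond_class x|)%N).
Proof.
move=> s_cyc; have size_ge3 : (3 <= size s)%N by case: s_cyc.
set x := nth 1 s 0; have x_s : x \in s by rewrite mem_nth // (ltn_trans _ size_ge3).
split=> [[_ not_proper] | [y [s_class _]]].
  have sub_x := dcycle_vertices_sub_diamond s_cyc x_s.
  have class_ge3 : (3 <= #|diamond_class x|)%N.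
    by rewrite (leq_trans size_ge3) // -card_dcycle_vertices // subset_leq_card.
  exists x; split=> //.
  case: (eqVneq (dcycle_vertices s) (diamond_class x)) => // neq_class; case: not_proper.
  exists (enum (diamond_class x)); split; first exact: enum_diamond_dcycle.
  by rewrite dcycle_vertices_enum properEneq neq_class sub_x.
split=> // -[t [t_cyc s_proper_t]].
have x_t : x \in t by have := subsetP (proper_sub s_proper_t) x; rewrite !inE; apply.
have x_class_y : x \in diamond_class y by rewrite -s_class inE.
have t_sub_s : dcycle_vertices t \subset dcycle_vertices s.
  by rewrite s_class -(diamond_class_eq x_class_y) dcycle_vertices_sub_diamond.
by have := proper_sub_trans s_proper_t t_sub_s; rewrite properxx.
Qed.
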